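(* Let $H\in(1/2,1)$, $\vartheta>0$ and let $S^H$ be a sub-fractional Brownian motion. There is a constant $C_{\vartheta,H}$ depending only on $\vartheta$ and $H$ such that for all $0\le s,t\le T$ with $s\ne t$, $$\mathbf E\Big[\int_s^T e^{-\vartheta(x-s)}dS^H_x\int_t^T e^{-\vartheta(y-t)}dS^H_y\Big]\le C_{\vartheta,H}|t-s|^{2H-2}$$ and $$\mathbf E\Big[\int_0^t e^{-\vartheta(t-u)}dS^H_u\int_0^s e^{-\vartheta(s-v)}dS^H_v\Big]\le C_{\vartheta,H}|t-s|^{2H-2}.$$
   Context: A sub-fractional Brownian motion $S^H$ is a centered Gaussian process with $S^H_0=0$ and covariance $\mathbf E(S^H_tS^H_s)=t^{2H}+s^{2H}-\frac12(|t-s|^{2H}+(t+s)^{2H})$. The integrals of deterministic functions with respect to $S^H$ are Wiener integrals, with $\mathbf E\int f\,dS^H\int g\,dS^H=\iint f(u)g(v)H(2H-1)(|u-v|^{2H-2}-(u+v)^{2H-2})\,du\,dv$. *)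

From Stdlib Require Import Reals.
Open Scope R_scope.

(* Covariance kernel of sub-fractional Brownian motion:
   phi_H(u,v) = H(2H-1)(|u-v|^{2H-2} - (u+v)^{2H-2}),
   set to 0 on the (Lebesgue-null) diagonal where it is singular. *)
Definition sfbm_kernel (H u v : R) : R :=
  if Req_EM_T u v then 0
  else H * (2 * H - 1) * (Rpower (Rabs (u - v)) (2 * H - 2) - Rpower (u + v) (2 * H - 2)).

Fixpoint rsum (n : nat) (f : nat -> R) : R :=
  match n with O => 0 | S k => rsum k f + f k end.

Definition grid_lower_sums (F : R -> R -> R) (a b c d : R) (z : R) : Prop :=
  exists (n : nat) (m : nat -> nat -> R),
    (0 < n)%nat /\
    (forall (i j : nat) (x y : R), (i < n)%nat -> (j < n)%nat ->
       a + INR i * ((b - a) / INR n) <= x <= a + INR (S i) * ((b - a) / INR n) ->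
       c + INR j * ((d - c) / INR n) <= y <= c + INR (S j) * ((d - c) / INR n) ->
       m i j <= F x y) /\
    z = rsum n (fun i => rsum n (fun j => m i j * ((b - a) / INR n) * ((d - c) / INR n))).

(* Integral of a NONNEGATIVE function over [a,b]x[c,d] (a<=b, c<=d): the supremum
   of lower sums; for nonnegative integrands continuous off a null set this is the
   (finite, when it exists) Lebesgue integral. *)
Definition is_double_integral_nonneg (F : R -> R -> R) (a b c d I : R) : Prop :=
  is_lub (grid_lower_sums F a b c d) I.

(* I = E[ int_a^b f dS^H  *  int_c^d g dS^H ]  (Wiener integrals, f,g >= 0),
   via  E = iint f(u) g(v) H(2H-1)(|u-v|^{2H-2} - (u+v)^{2H-2}) du dv. *)
Definition sfbm_wiener_cov (H : R) (f : R -> R) (a b : R) (g : R -> R) (c d : R) (I : R) : Prop :=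
  is_double_integral_nonneg (fun u v => f u * g v * sfbm_kernel H u v) a b c d I.

From Stdlib Require Import Reals Lra Lia FunctionalExtensionality.
From Coquelicot Require Import Coquelicot.
Open Scope R_scope.

(* With K = H(2H-1) and delta = |t - s|, the kernel is at most K |u-v|^(2H-2).
   By the triangle inequality, where |u - v| < delta/2 the exponential weights
   have total exponent at least theta delta/2, so the integrand is at most
     K (delta/2)^(2H-2) e(u) e(v) + K exp(-theta delta/4) e'(u) e'(v) |u-v|^(2H-2)
   with e, e' the weights at rates theta and theta/2.  The lower Darboux sums
   of this majorant are bounded column by column by telescoping explicit
   primitives, which are bounded independently of T.  Finally
   exp(-theta delta/4) <= (1 + 4/theta) delta^(2H-2). *)

Lemma rsum_le n f g : (forall k, (k < n)%nat -> f k <= g k) -> rsum n f <= rsum n g.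
Proof.
  induction n as [|n IH]; simpl; intros Hfg; [lra|].
  assert (rsum n f <= rsum n g) by (apply IH; intros; apply Hfg; lia).
  assert (f n <= g n) by (apply Hfg; lia).
  lra.
Qed.

Lemma rsum_le_telescope n (u v : nat -> R) :
  (forall k, (k < n)%nat -> u k <= v (S k) - v k) -> rsum n u <= v n - v O.
Proof.
  induction n as [|n IH]; simpl; intros Huv; [lra|].
  assert (rsum n u <= v n - v O) by (apply IH; intros; apply Huv; lia).
  assert (u n <= v (S n) - v n) by (apply Huv; lia).
  lra.
Qed.

Lemma grid_node_bounds n k h e : (k < n)%nat -> 0 <= h -> INR n * h = e ->
  0 <= INR k * h /\ INR k * h + h <= e /\ INR (S k) * h = INR k * h + h.
Proof.
  intros hk hh he.
  assert (INR (S k) <= INR n) by (apply le_INR; lia).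
  rewrite S_INR in *. pose proof (pos_INR k). nra.
Qed.

Lemma grid_lower_sums_le (F : R -> R -> R) (P : R -> R -> R -> R) (Q : R -> R)
    (a b c d B : R) :
  a <= b -> c <= d ->
  (forall hx hy x1 y1 mu, 0 <= hx -> 0 <= hy ->
     a <= x1 -> x1 + hx <= b -> c <= y1 -> y1 + hy <= d ->
     (forall x y, x1 <= x <= x1 + hx -> y1 <= y <= y1 + hy -> mu <= F x y) ->
     mu * hy <= P hx x1 (y1 + hy) - P hx x1 y1) ->
  (forall hx x1, 0 <= hx -> a <= x1 -> x1 + hx <= b ->
     hx * (P hx x1 d - P hx x1 c) <= Q (x1 + hx) - Q x1) ->
  Q b - Q a <= B ->
  forall z, grid_lower_sums F a b c d z -> z <= B.
Proof.
  intros hab hcd Hcell Hcol HQ z [n [m [hn [hm ->]]]].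
  assert (hN : 0 < INR n) by (apply lt_0_INR; lia).
  set (hx := (b - a) / INR n) in *.
  set (hy := (d - c) / INR n) in *.
  assert (hx0 : 0 <= hx) by (apply Rdiv_le_0_compat; lra).
  assert (hy0 : 0 <= hy) by (apply Rdiv_le_0_compat; lra).
  assert (hxn : INR n * hx = b - a) by (unfold hx; field; lra).
  assert (hyn : INR n * hy = d - c) by (unfold hy; field; lra).
  assert (Hrow : forall i, (i < n)%nat ->
            rsum n (fun j => m i j * hx * hy)
            <= Q (a + INR (S i) * hx) - Q (a + INR i * hx)).
  { intros i hi.
    destruct (grid_node_bounds n i hx (b - a) hi hx0 hxn) as [hi1 [hi2 hi3]].
    set (x1 := a + INR i * hx).
    replace (a + INR (S i) * hx) with (x1 + hx) by (unfold x1; lra).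
    eapply Rle_trans; [|apply Hcol; unfold x1; lra].
    replace (hx * (P hx x1 d - P hx x1 c))
      with (hx * P hx x1 (c + INR n * hy) - hx * P hx x1 (c + INR O * hy))
      by (simpl; replace (c + INR n * hy) with d by lra; replace (c + 0 * hy) with c by ring; ring).
    apply (rsum_le_telescope n _ (fun j => hx * P hx x1 (c + INR j * hy))).
    intros j hj.
    destruct (grid_node_bounds n j hy (d - c) hj hy0 hyn) as [hj1 [hj2 hj3]].
    replace (c + INR (S j) * hy) with (c + INR j * hy + hy) by lra.
    assert (Hc : m i j * hy <= P hx x1 (c + INR j * hy + hy) - P hx x1 (c + INR j * hy)).
    { apply Hcell; unfold x1; try lra.
      intros x y hx' hy'. unfold x1 in hx'. apply hm; rewrite ?hi3, ?hj3; (lia || lra). }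
    apply Rmult_le_compat_l with (r := hx) in Hc; [|exact hx0].
    lra. }
  eapply Rle_trans; [apply rsum_le, Hrow|].
  eapply Rle_trans; [apply rsum_le_telescope with (v := fun i => Q (a + INR i * hx)); intros; lra|].
  replace (a + INR n * hx) with b by lra.
  replace (a + INR 0 * hx) with a by (simpl; ring).
  exact HQ.
Qed.

Lemma double_integral_nonneg_le (F : R -> R -> R) (a b c d B : R) :
  a <= b -> c <= d ->
  (forall x y, a <= x <= b -> c <= y <= d -> 0 <= F x y) ->
  (forall z, grid_lower_sums F a b c d z -> z <= B) ->
  exists I, is_double_integral_nonneg F a b c d I /\ I <= B.
Proof.
  intros hab hcd Hpos Hub.
  destruct (completeness (grid_lower_sums F a b c d)) as [I HI].
  - exists B. exact Hub.
  - exists 0, 1%nat, (fun _ _ => 0). split; [lia|split; [|simpl; ring]].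
    intros i j x y hi hj hx hy.
    replace i with O in hx by lia. replace j with O in hy by lia.
    simpl INR in hx, hy. apply Hpos.
    + replace (a + 0 * ((b - a) / 1)) with a in hx by field.
      replace (a + 1 * ((b - a) / 1)) with b in hx by field. lra.
    + replace (c + 0 * ((d - c) / 1)) with c in hy by field.
      replace (c + 1 * ((d - c) / 1)) with d in hy by field. lra.
  - exists I. split; [exact HI|]. apply HI. exact Hub.
Qed.

Lemma increment_ge_of_derive_ge (f f' : R -> R) (m y1 y2 : R) :
  y1 <= y2 ->
  (forall y, y1 <= y <= y2 -> is_derive f y (f' y)) ->
  (forall y, y1 <= y <= y2 -> m <= f' y) ->
  m * (y2 - y1) <= f y2 - f y1.
Proof.
  intros hy Hd Hm.
  destruct (Req_dec y1 y2) as [<-|hne]; [lra|].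
  destruct (MVT_cor2 f f' y1 y2) as [xi [-> hxi]]; [lra| |].
  - intros y hy'. apply is_derive_Reals, Hd, hy'.
  - apply Rmult_le_compat_r; [lra|]. apply Hm; lra.
Qed.

Lemma exp_le_mono x y : x <= y -> exp x <= exp y.
Proof. intros [hlt| ->]; [left; apply exp_increasing, hlt | lra]. Qed.

Lemma exp_le_1 x : x <= 0 -> exp x <= 1.
Proof. intros h. rewrite <- exp_0. apply exp_le_mono, h. Qed.

Definition expw (L z0 y : R) : R := exp (- L * (y - z0)).
Definition expw_prim (L z0 y : R) : R := - expw L z0 y / L.

Lemma expw_pos L z0 y : 0 < expw L z0 y.
Proof. apply exp_pos. Qed.

Lemma expw_le_1 L z0 y : 0 <= L * (y - z0) -> expw L z0 y <= 1.
Proof. intros h. apply exp_le_1. lra. Qed.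

Lemma expw_mul L w0 z0 x y :
  expw L w0 x * expw L z0 y = exp (- (L * (x - w0) + L * (y - z0))).
Proof. unfold expw. rewrite <- exp_plus. f_equal. ring. Qed.

Lemma expw_antitone L z0 y1 y2 : 0 < L -> y1 <= y2 -> expw L z0 y2 <= expw L z0 y1.
Proof. intros. apply exp_le_mono. nra. Qed.

Lemma expw_monotone L z0 y1 y2 : L < 0 -> y1 <= y2 -> expw L z0 y1 <= expw L z0 y2.
Proof. intros. apply exp_le_mono. nra. Qed.

Lemma expw_prim_derive L z0 y : L <> 0 -> is_derive (expw_prim L z0) y (expw L z0 y).
Proof. intros hL. unfold expw_prim, expw. auto_derive; [exact I|]. unfold Rminus. field. exact hL. Qed.

Lemma expw_prim_monotone L z0 y1 y2 :
  L <> 0 -> y1 <= y2 -> expw_prim L z0 y1 <= expw_prim L z0 y2.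
Proof.
  intros hL hy.
  pose proof (increment_ge_of_derive_ge (expw_prim L z0) (expw L z0) 0 y1 y2 hy
    (fun y _ => expw_prim_derive L z0 y hL) (fun y _ => Rlt_le _ _ (expw_pos L z0 y))).
  lra.
Qed.

Lemma expw_prim_range L z0 y1 y2 :
  L <> 0 -> expw L z0 y1 <= 1 -> expw L z0 y2 <= 1 ->
  expw_prim L z0 y2 - expw_prim L z0 y1 <= 1 / Rabs L.
Proof.
  intros hL h1 h2. pose proof (expw_pos L z0 y1). pose proof (expw_pos L z0 y2).
  unfold expw_prim.
  replace (- expw L z0 y2 / L - - expw L z0 y1 / L)
    with ((expw L z0 y1 - expw L z0 y2) / L) by (field; exact hL).
  destruct (Rle_lt_dec 0 L) as [hL'|hL'].
  - rewrite Rabs_right by lra. apply Rmult_le_compat_r; [|lra].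
    left. apply Rinv_0_lt_compat. lra.
  - rewrite Rabs_left by lra.
    replace ((expw L z0 y1 - expw L z0 y2) / L) with ((expw L z0 y2 - expw L z0 y1) / - L)
      by (field; exact hL).
    apply Rmult_le_compat_r; [|lra]. left. apply Rinv_0_lt_compat. lra.
Qed.

(* [kdens p z] dominates [z ^ (p - 1) / 4] near [0] while its primitive
   [kprim p] stays below [1 / p]; [z ^ p / p] would not be bounded. *)
Definition kprim (p z : R) : R := Rpower (z / (1 + z)) p / p.
Definition kdens (p z : R) : R := Rpower (z / (1 + z)) p / (z * (1 + z)).
Definition kprim_odd (p z : R) : R :=
  if Rlt_dec 0 z then kprim p z else if Rlt_dec z 0 then - kprim p (- z) else 0.

Lemma kdens_pos p z : 0 < z -> 0 < kdens p z.
Proof. intros hz. apply Rdiv_lt_0_compat; [apply exp_pos | nra]. Qed.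

Lemma kprim_derive p z : 0 < p -> 0 < z -> is_derive (kprim p) z (kdens p z).
Proof.
  intros hp hz. unfold kprim, kdens, Rpower.
  assert (0 < z / (1 + z)) by (apply Rdiv_lt_0_compat; lra).
  auto_derive.
  - repeat split; lra.
  - unfold Rdiv. field. lra.
Qed.

Lemma kprim_bounds p z : 0 < p -> 0 < z -> 0 < kprim p z <= 1 / p.
Proof.
  intros hp hz. unfold kprim, Rpower.
  assert (0 < z / (1 + z) < 1).
  { split; [apply Rdiv_lt_0_compat; lra|].
    apply (Rmult_lt_reg_r (1 + z)); [lra|]. field_simplify; lra. }
  assert (ln (z / (1 + z)) < 0) by (rewrite <- ln_1; apply ln_increasing; lra).
  assert (exp (p * ln (z / (1 + z))) <= 1) by (apply exp_le_1; nra).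
  pose proof (exp_pos (p * ln (z / (1 + z)))).
  split; [apply Rdiv_lt_0_compat; lra|].
  apply Rmult_le_compat_r; [left; apply Rinv_0_lt_compat|]; lra.
Qed.

Lemma kprim_monotone p z1 z2 : 0 < p -> 0 < z1 -> z1 <= z2 -> kprim p z1 <= kprim p z2.
Proof.
  intros hp hz1 hz.
  pose proof (increment_ge_of_derive_ge (kprim p) (kdens p) 0 z1 z2 hz
    (fun z hz' => kprim_derive p z hp ltac:(lra))
    (fun z hz' => Rlt_le _ _ (kdens_pos p z ltac:(lra)))).
  lra.
Qed.

Lemma rpow_le_kdens p z : 0 < p < 1 -> 0 < z <= 1 -> Rpower z (p - 1) <= 4 * kdens p z.
Proof.
  intros hp hz. unfold kdens, Rpower.
  rewrite ln_div by lra.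
  replace (p * (ln z - ln (1 + z))) with ((p - 1) * ln z + ln z + (- p * ln (1 + z))) by ring.
  rewrite !exp_plus, exp_ln by lra.
  assert (0 <= ln (1 + z) <= ln 2).
  { split; [rewrite <- ln_1|]; apply ln_le; lra. }
  assert (Hhalf : / 2 <= exp (- p * ln (1 + z))).
  { rewrite <- (exp_ln (/ 2)), ln_Rinv by lra. apply exp_le_mono. nra. }
  pose proof (exp_pos ((p - 1) * ln z)).
  set (A := exp ((p - 1) * ln z)) in *.
  set (B := exp (- p * ln (1 + z))) in *.
  replace (4 * (A * z * B / (z * (1 + z)))) with (4 * A * B / (1 + z)) by (field; lra).
  apply (Rmult_le_reg_r (1 + z)); [lra|].
  replace (4 * A * B / (1 + z) * (1 + z)) with (4 * A * B) by (field; lra).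
  nra.
Qed.

Lemma weighted_rpow_le_kdens p g z : 0 < p < 1 -> 0 < g <= 1 -> 0 < z ->
  g * Rpower z (p - 1) <= 4 * kdens p z + g.
Proof.
  intros hp hg hz. pose proof (kdens_pos p z hz).
  destruct (Rle_dec z 1).
  - pose proof (rpow_le_kdens p z hp ltac:(lra)).
    pose proof (exp_pos ((p - 1) * ln z)). unfold Rpower in *. nra.
  - assert (0 < ln z) by (rewrite <- ln_1; apply ln_increasing; lra).
    assert (Rpower z (p - 1) <= 1) by (apply exp_le_1; nra).
    nra.
Qed.

Lemma kprim_odd_derive p z : 0 < p -> z <> 0 ->
  is_derive (kprim_odd p) z (kdens p (Rabs z)).
Proof.
  intros hp hz.
  destruct (Rlt_dec 0 z) as [hpos|hneg].
  - rewrite Rabs_right by lra.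
    apply (is_derive_ext_loc (kprim p)); [|apply kprim_derive; lra].
    exists (mkposreal z hpos). intros y hy.
    change (Rabs (y - z) < z) in hy. apply Rabs_lt_between in hy.
    unfold kprim_odd. destruct (Rlt_dec 0 y); [reflexivity | lra].
  - assert (hz' : 0 < - z) by lra.
    rewrite Rabs_left by lra.
    apply (is_derive_ext_loc (fun y => - kprim p (- y))).
    + exists (mkposreal (- z) hz'). intros y hy.
      change (Rabs (y - z) < - z) in hy. apply Rabs_lt_between in hy.
      unfold kprim_odd. destruct (Rlt_dec 0 y); [lra|].
      destruct (Rlt_dec y 0); [reflexivity | lra].
    + pose proof (kprim_derive p (- z) hp hz') as Hd.
      auto_derive.
      * exists (kdens p (- z)). exact Hd.
      * replace (Derive (fun x : R => kprim p x) (- z)) with (kdens p (- z))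
          by (symmetry; apply is_derive_unique, Hd).
        ring.
Qed.

Lemma kprim_odd_monotone p z1 z2 : 0 < p -> z1 <= z2 -> kprim_odd p z1 <= kprim_odd p z2.
Proof.
  intros hp hz. unfold kprim_odd.
  destruct (Rlt_dec 0 z1), (Rlt_dec 0 z2); try lra.
  - apply kprim_monotone; lra.
  - pose proof (kprim_bounds p z2 hp ltac:(lra)).
    destruct (Rlt_dec z1 0); [|lra].
    pose proof (kprim_bounds p (- z1) hp ltac:(lra)). lra.
  - destruct (Rlt_dec z1 0), (Rlt_dec z2 0); try lra.
    + pose proof (kprim_monotone p (- z2) (- z1) hp ltac:(lra) ltac:(lra)). lra.
    + pose proof (kprim_bounds p (- z1) hp ltac:(lra)). lra.
Qed.

Lemma kprim_odd_bound p z : 0 < p -> Rabs (kprim_odd p z) <= 1 / p.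
Proof.
  intros hp. assert (0 < 1 / p) by (apply Rdiv_lt_0_compat; lra).
  unfold kprim_odd. destruct (Rlt_dec 0 z).
  - pose proof (kprim_bounds p z hp r). rewrite Rabs_right; lra.
  - destruct (Rlt_dec z 0).
    + pose proof (kprim_bounds p (- z) hp ltac:(lra)). rewrite Rabs_left; lra.
    + rewrite Rabs_R0. lra.
Qed.

Definition column_prim (p A1 A2 L z0 x y : R) : R :=
  A1 * expw_prim L z0 y + A2 * (4 * kprim_odd p (y - x) + expw_prim (L / 2) z0 y).

Lemma column_prim_derive p A1 A2 L z0 x y : 0 < p -> L <> 0 -> y <> x ->
  is_derive (column_prim p A1 A2 L z0 x) y
    (A1 * expw L z0 y + A2 * (4 * kdens p (Rabs (y - x)) + expw (L / 2) z0 y)).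
Proof.
  intros hp hL hxy.
  pose proof (expw_prim_derive L z0 y hL) as H1.
  pose proof (expw_prim_derive (L / 2) z0 y ltac:(lra)) as H2.
  pose proof (kprim_odd_derive p (y - x) hp ltac:(lra)) as H3.
  unfold column_prim. auto_derive.
  - repeat split.
    + exists (expw L z0 y). exact H1.
    + exists (kdens p (Rabs (y - x))). exact H3.
    + exists (expw (L / 2) z0 y). exact H2.
  - replace (Derive (fun t : R => expw_prim L z0 t) y) with (expw L z0 y)
      by (symmetry; apply is_derive_unique, H1).
    replace (Derive (fun t : R => kprim_odd p t) (y + - x)) with (kdens p (Rabs (y - x)))
      by (symmetry; apply is_derive_unique, H3).
    replace (Derive (fun t : R => expw_prim (L / 2) z0 t) y) with (expw (L / 2) z0 y)
      by (symmetry; apply is_derive_unique, H2).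
    ring.
Qed.

Lemma column_prim_monotone p A1 A2 L z0 x y1 y2 :
  0 < p -> 0 <= A1 -> 0 <= A2 -> L <> 0 -> y1 <= y2 ->
  column_prim p A1 A2 L z0 x y1 <= column_prim p A1 A2 L z0 x y2.
Proof.
  intros hp hA1 hA2 hL hy. unfold column_prim.
  pose proof (expw_prim_monotone L z0 y1 y2 hL hy).
  pose proof (expw_prim_monotone (L / 2) z0 y1 y2 ltac:(lra) hy).
  pose proof (kprim_odd_monotone p (y1 - x) (y2 - x) hp ltac:(lra)).
  apply Rplus_le_compat; apply Rmult_le_compat_l; lra.
Qed.

Lemma column_prim_range p A1 A2 L z0 x y1 y2 :
  0 < p -> 0 <= A1 -> 0 <= A2 -> L <> 0 ->
  0 <= L * (y1 - z0) -> 0 <= L * (y2 - z0) ->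
  column_prim p A1 A2 L z0 x y2 - column_prim p A1 A2 L z0 x y1
  <= A1 / Rabs L + A2 * (8 / p + 2 / Rabs L).
Proof.
  intros hp hA1 hA2 hL h1 h2. unfold column_prim.
  pose proof (expw_prim_range L z0 y1 y2 hL
    (expw_le_1 L z0 y1 h1) (expw_le_1 L z0 y2 h2)) as HE1.
  pose proof (expw_prim_range (L / 2) z0 y1 y2 ltac:(lra)
    (expw_le_1 (L / 2) z0 y1 ltac:(lra)) (expw_le_1 (L / 2) z0 y2 ltac:(lra))) as HE2.
  replace (Rabs (L / 2)) with (Rabs L / 2) in HE2
    by (unfold Rdiv; rewrite Rabs_mult, Rabs_inv, (Rabs_right 2) by lra; ring).
  pose proof (proj1 (Rabs_le_between _ _) (kprim_odd_bound p (y1 - x) hp)).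
  pose proof (proj1 (Rabs_le_between _ _) (kprim_odd_bound p (y2 - x) hp)).
  assert (HA1 : A1 * (expw_prim L z0 y2 - expw_prim L z0 y1) <= A1 * (1 / Rabs L))
    by (apply Rmult_le_compat_l; lra).
  assert (HA2 : A2 * (4 * kprim_odd p (y2 - x) + expw_prim (L / 2) z0 y2
                      - (4 * kprim_odd p (y1 - x) + expw_prim (L / 2) z0 y1))
                <= A2 * (8 / p + 2 / Rabs L)).
  { apply Rmult_le_compat_l; [exact hA2|].
    replace (8 / p) with (4 * (1 / p) + 4 * (1 / p)) by (field; lra).
    replace (2 / Rabs L) with (1 / (Rabs L / 2))
      by (field; apply Rabs_no_R0, hL).
    lra. }
  unfold Rdiv in *. lra.
Qed.

Lemma column_prim_increment p A1 A2 L z0 x y1 y2 m :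
  0 < p < 1 -> 0 <= A1 -> 0 <= A2 -> L <> 0 -> y1 <= y2 -> (x < y1 \/ y2 < x) ->
  (forall y, y1 <= y <= y2 -> 0 <= L * (y - z0)) ->
  (forall y, y1 <= y <= y2 ->
     m <= A1 * expw L z0 y + A2 * expw (L / 2) z0 y * Rpower (Rabs (y - x)) (p - 1)) ->
  m * (y2 - y1) <= column_prim p A1 A2 L z0 x y2 - column_prim p A1 A2 L z0 x y1.
Proof.
  intros hp hA1 hA2 hL hy hx hside Hm.
  apply increment_ge_of_derive_ge with
    (f' := fun y => A1 * expw L z0 y + A2 * (4 * kdens p (Rabs (y - x)) + expw (L / 2) z0 y));
    [exact hy | intros y hy'; apply column_prim_derive; lra |].
  intros y hy'.
  eapply Rle_trans; [apply Hm, hy'|].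
  apply Rplus_le_compat_l. rewrite Rmult_assoc. apply Rmult_le_compat_l; [exact hA2|].
  apply weighted_rpow_le_kdens; [exact hp| |apply Rabs_pos_lt; lra].
  split; [apply expw_pos | apply expw_le_1].
  pose proof (hside y hy'). lra.
Qed.

Section SplitMajorant.

Variables (F : R -> R -> R) (a b c d p L w0 z0 A B : R).
Hypotheses (hab : a <= b) (hcd : c <= d) (hp : 0 < p < 1) (hL : L <> 0)
  (hA : 0 <= A) (hB : 0 <= B).
Hypothesis x_side : forall x, a <= x <= b -> 0 <= L * (x - w0).
Hypothesis y_side : forall y, c <= y <= d -> 0 <= L * (y - z0).
Hypothesis F_diag : forall x, a <= x <= b -> c <= x <= d -> F x x <= 0.
Hypothesis F_le : forall x y, a <= x <= b -> c <= y <= d -> x <> y ->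
  F x y <= A * expw L w0 x * expw L z0 y
           + B * expw (L / 2) w0 x * expw (L / 2) z0 y * Rpower (Rabs (y - x)) (p - 1).

(* The point of the column [x1, x1 + hx] where the weights in [x] are smallest. *)
Let sel (hx x1 : R) : R := if Rlt_dec 0 L then x1 + hx else x1.

Let col (hx x1 : R) : R -> R :=
  column_prim p (A * expw L w0 (sel hx x1)) (B * expw (L / 2) w0 (sel hx x1))
    L z0 (sel hx x1).

Let row (x : R) : R :=
  A / Rabs L * expw_prim L w0 x + B * (8 / p + 2 / Rabs L) * expw_prim (L / 2) w0 x.

Lemma sel_in_column hx x1 : 0 <= hx -> x1 <= sel hx x1 <= x1 + hx.
Proof. intros. unfold sel. destruct (Rlt_dec 0 L); lra. Qed.

Lemma expw_sel_le L' hx x1 x : 0 < L' * L -> x1 <= x <= x1 + hx ->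
  expw L' w0 (sel hx x1) <= expw L' w0 x.
Proof.
  intros hLL hx'. unfold sel. destruct (Rlt_dec 0 L).
  - apply expw_antitone; nra.
  - apply expw_monotone; nra.
Qed.

Lemma split_majorant_cell hx hy x1 y1 mu : 0 <= hx -> 0 <= hy ->
  a <= x1 -> x1 + hx <= b -> c <= y1 -> y1 + hy <= d ->
  (forall x y, x1 <= x <= x1 + hx -> y1 <= y <= y1 + hy -> mu <= F x y) ->
  mu * hy <= col hx x1 (y1 + hy) - col hx x1 y1.
Proof.
  intros hhx hhy ha hb hc hd Hmu.
  pose proof (sel_in_column hx x1 hhx) as hsel.
  assert (hA1 : 0 <= A * expw L w0 (sel hx x1))
    by (apply Rmult_le_pos; [exact hA | apply Rlt_le, expw_pos]).
  assert (hA2 : 0 <= B * expw (L / 2) w0 (sel hx x1))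
    by (apply Rmult_le_pos; [exact hB | apply Rlt_le, expw_pos]).
  destruct (Rle_dec mu 0) as [hmu|hmu].
  { pose proof (column_prim_monotone p _ _ L z0 (sel hx x1) y1 (y1 + hy)
      ltac:(lra) hA1 hA2 hL ltac:(lra)). unfold col. nra. }
  (* As [mu > 0], the cell misses the diagonal, where [F] is nonpositive. *)
  assert (hout : sel hx x1 < y1 \/ y1 + hy < sel hx x1).
  { destruct (Rlt_dec (sel hx x1) y1); [left; exact r|].
    destruct (Rlt_dec (y1 + hy) (sel hx x1)); [right; exact r|].
    exfalso.
    assert (mu <= F (sel hx x1) (sel hx x1)) by (apply Hmu; lra).
    assert (F (sel hx x1) (sel hx x1) <= 0) by (apply F_diag; lra).
    lra. }
  replace hy with (y1 + hy - y1) at 1 by ring.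
  apply column_prim_increment; try lra.
  - intros y hy'. apply y_side. lra.
  - intros y hy'.
    eapply Rle_trans; [apply Hmu; [exact hsel | exact hy']|].
    eapply Rle_trans; [apply F_le; lra|].
    right. ring.
Qed.

Lemma split_majorant_column hx x1 : 0 <= hx -> a <= x1 -> x1 + hx <= b ->
  hx * (col hx x1 d - col hx x1 c) <= row (x1 + hx) - row x1.
Proof.
  intros hhx ha hb.
  pose proof (sel_in_column hx x1 hhx) as hsel.
  assert (hL2 : L / 2 <> 0) by lra.
  assert (hLa : 0 < Rabs L) by (apply Rabs_pos_lt, hL).
  assert (hK : 0 <= 8 / p + 2 / Rabs L).
  { apply Rplus_le_le_0_compat; apply Rlt_le, Rdiv_lt_0_compat; lra. }
  pose proof (expw_pos L w0 (sel hx x1)). pose proof (expw_pos (L / 2) w0 (sel hx x1)).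
  pose proof (column_prim_range p (A * expw L w0 (sel hx x1))
    (B * expw (L / 2) w0 (sel hx x1)) L z0 (sel hx x1) c d ltac:(lra)
    ltac:(apply Rmult_le_pos; lra) ltac:(apply Rmult_le_pos; lra) hL
    (y_side c ltac:(lra)) (y_side d ltac:(lra))) as Hrange.
  assert (hLL : 0 < L * L) by (pose proof (Rsqr_pos_lt L hL); unfold Rsqr in *; lra).
  pose proof (increment_ge_of_derive_ge (expw_prim L w0) (expw L w0)
    (expw L w0 (sel hx x1)) x1 (x1 + hx) ltac:(lra)
    (fun y _ => expw_prim_derive L w0 y hL)
    (fun y hy => expw_sel_le L hx x1 y hLL hy)) as H1.
  pose proof (increment_ge_of_derive_ge (expw_prim (L / 2) w0) (expw (L / 2) w0)
    (expw (L / 2) w0 (sel hx x1)) x1 (x1 + hx) ltac:(lra)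
    (fun y _ => expw_prim_derive (L / 2) w0 y hL2)
    (fun y hy => expw_sel_le (L / 2) hx x1 y ltac:(lra) hy)) as H2.
  replace (x1 + hx - x1) with hx in H1, H2 by ring.
  apply Rmult_le_compat_l with (r := hx) in Hrange; [|exact hhx].
  eapply Rle_trans; [exact Hrange|].
  unfold row.
  assert (0 <= A / Rabs L) by (apply Rdiv_le_0_compat; lra).
  apply Rmult_le_compat_l with (r := A / Rabs L) in H1; [|assumption].
  apply Rmult_le_compat_l with (r := B * (8 / p + 2 / Rabs L)) in H2;
    [|apply Rmult_le_pos; assumption].
  unfold Rdiv in *. nra.
Qed.

Lemma split_majorant_lower_sums_le z : grid_lower_sums F a b c d z ->
  z <= A / Rabs L / Rabs L + B * (8 / p + 2 / Rabs L) * (2 / Rabs L).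
Proof.
  apply (grid_lower_sums_le F col row); try assumption.
  - exact split_majorant_cell.
  - exact split_majorant_column.
  - assert (hLa : 0 < Rabs L) by (apply Rabs_pos_lt, hL).
    assert (hK : 0 <= 8 / p + 2 / Rabs L).
    { apply Rplus_le_le_0_compat; apply Rlt_le, Rdiv_lt_0_compat; lra. }
    pose proof (expw_prim_range L w0 a b hL
      (expw_le_1 L w0 a (x_side a ltac:(lra))) (expw_le_1 L w0 b (x_side b ltac:(lra)))).
    pose proof (expw_prim_range (L / 2) w0 a b ltac:(lra)
      (expw_le_1 (L / 2) w0 a ltac:(pose proof (x_side a ltac:(lra)); lra))
      (expw_le_1 (L / 2) w0 b ltac:(pose proof (x_side b ltac:(lra)); lra))) as H2.
    replace (Rabs (L / 2)) with (Rabs L / 2) in H2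
      by (unfold Rdiv; rewrite Rabs_mult, Rabs_inv, (Rabs_right 2) by lra; ring).
    replace (1 / (Rabs L / 2)) with (2 / Rabs L) in H2 by (field; lra).
    unfold row.
    assert (0 <= A / Rabs L) by (apply Rdiv_le_0_compat; lra).
    apply Rmult_le_compat_l with (r := A / Rabs L) in H; [|assumption].
    apply Rmult_le_compat_l with (r := B * (8 / p + 2 / Rabs L)) in H2;
      [|apply Rmult_le_pos; assumption].
    unfold Rdiv in *. nra.
Qed.

End SplitMajorant.

Lemma sfbm_kernel_diag H u : sfbm_kernel H u u = 0.
Proof. unfold sfbm_kernel. destruct (Req_EM_T u u); [reflexivity | congruence]. Qed.

Lemma sfbm_kernel_le H u v : 1 / 2 <= H -> u <> v ->
  sfbm_kernel H u v <= H * (2 * H - 1) * Rpower (Rabs (v - u)) (2 * H - 2).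
Proof.
  intros hH huv. unfold sfbm_kernel. destruct (Req_EM_T u v); [congruence|].
  rewrite Rabs_minus_sym.
  pose proof (exp_pos ((2 * H - 2) * ln (u + v))). unfold Rpower in *.
  apply Rmult_le_compat_l; [nra | lra].
Qed.

Lemma sfbm_kernel_nonneg H u v : 1 / 2 < H < 1 -> 0 <= u -> 0 <= v ->
  0 <= sfbm_kernel H u v.
Proof.
  intros hH hu hv. unfold sfbm_kernel. destruct (Req_EM_T u v); [lra|].
  apply Rmult_le_pos; [nra|].
  assert (0 < Rabs (u - v)) by (apply Rabs_pos_lt; lra).
  assert (Rabs (u - v) <= u + v) by (apply Rabs_le; lra).
  assert (ln (Rabs (u - v)) <= ln (u + v)) by (apply ln_le; lra).
  assert (exp ((2 * H - 2) * ln (u + v)) <= exp ((2 * H - 2) * ln (Rabs (u - v))))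
    by (apply exp_le_mono; nra).
  unfold Rpower. lra.
Qed.

(* For [z < delta], one factor of [exp (-P) = exp (-P/2) ^ 2] is spent. *)
Lemma exp_rpow_le_split P z delta eps bt : 0 < z -> 0 < delta -> bt <= 0 ->
  (z < delta -> eps <= P) ->
  exp (- P) * Rpower z bt
  <= Rpower delta bt * exp (- P) + exp (- eps / 2) * exp (- P / 2) * Rpower z bt.
Proof.
  intros hz hd hbt Heps.
  pose proof (exp_pos (- P)). pose proof (exp_pos (- P / 2)).
  pose proof (exp_pos (- eps / 2)).
  pose proof (exp_pos (bt * ln z)). pose proof (exp_pos (bt * ln delta)).
  unfold Rpower.
  destruct (Rlt_dec z delta) as [hlt|hge].
  - replace (exp (- P)) with (exp (- P / 2) * exp (- P / 2))
      by (rewrite <- exp_plus; f_equal; field).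
    assert (exp (- P / 2) <= exp (- eps / 2)) by (apply exp_le_mono; specialize (Heps hlt); lra).
    assert (0 < exp (- P / 2) * exp (bt * ln z)) by nra.
    nra.
  - assert (ln delta <= ln z) by (apply ln_le; lra).
    assert (exp (bt * ln z) <= exp (bt * ln delta)) by (apply exp_le_mono; nra).
    assert (0 < exp (- eps / 2) * exp (- P / 2) * exp (bt * ln z))
      by (repeat apply Rmult_lt_0_compat; assumption).
    nra.
Qed.

Lemma expw_weighted_kernel_le H L w0 z0 x y :
  1 / 2 < H < 1 -> w0 <> z0 -> 0 <= L * (x - w0) -> 0 <= L * (y - z0) -> x <> y ->
  expw L w0 x * expw L z0 y * sfbm_kernel H x y
  <= H * (2 * H - 1) * Rpower (Rabs (w0 - z0) / 2) (2 * H - 2) * expw L w0 x * expw L z0 y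
     + H * (2 * H - 1) * exp (- (Rabs L / 4 * Rabs (w0 - z0)))
       * expw (L / 2) w0 x * expw (L / 2) z0 y * Rpower (Rabs (y - x)) (2 * H - 2).
Proof.
  intros hH hwz hx hy hxy.
  set (P := L * (x - w0) + L * (y - z0)).
  assert (HP : P = Rabs L * (Rabs (x - w0) + Rabs (y - z0))).
  { unfold P. rewrite Rmult_plus_distr_l, <- !Rabs_mult, !Rabs_right; lra. }
  assert (Htri : Rabs (w0 - z0) <= Rabs (x - w0) + Rabs (y - z0) + Rabs (y - x)).
  { replace (w0 - z0) with (- (x - w0) + (y - z0) + - (y - x)) by ring.
    eapply Rle_trans; [apply Rabs_triang|].
    eapply Rle_trans; [apply Rplus_le_compat_r, Rabs_triang|].
    rewrite !Rabs_Ropp. lra. }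
  assert (Hexp : expw L w0 x * expw L z0 y = exp (- P)) by apply expw_mul.
  assert (Hexp2 : expw (L / 2) w0 x * expw (L / 2) z0 y = exp (- P / 2))
    by (rewrite expw_mul; f_equal; unfold P; field).
  assert (hK : 0 <= H * (2 * H - 1)) by nra.
  assert (Hnear : Rabs (y - x) < Rabs (w0 - z0) / 2 -> Rabs L * (Rabs (w0 - z0) / 2) <= P).
  { intros hnear. rewrite HP. apply Rmult_le_compat_l; [apply Rabs_pos | lra]. }
  pose proof (exp_rpow_le_split P (Rabs (y - x)) (Rabs (w0 - z0) / 2)
    (Rabs L * (Rabs (w0 - z0) / 2)) (2 * H - 2)
    ltac:(apply Rabs_pos_lt; lra) ltac:(apply Rdiv_lt_0_compat; [apply Rabs_pos_lt|]; lra)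
    ltac:(lra) Hnear) as Hsplit.
  rewrite Hexp.
  eapply Rle_trans.
  { apply Rmult_le_compat_l; [apply Rlt_le, exp_pos|]. apply sfbm_kernel_le; lra. }
  replace (exp (- P) * (H * (2 * H - 1) * Rpower (Rabs (y - x)) (2 * H - 2)))
    with (H * (2 * H - 1) * (exp (- P) * Rpower (Rabs (y - x)) (2 * H - 2))) by ring.
  eapply Rle_trans; [apply Rmult_le_compat_l; [exact hK | exact Hsplit]|].
  right. rewrite <- Hexp, <- Hexp2.
  replace (- (Rabs L / 4 * Rabs (w0 - z0))) with (- (Rabs L * (Rabs (w0 - z0) / 2)) / 2)
    by field.
  ring.
Qed.

Lemma exp_neg_le_rpow c bt delta : 0 < c -> -1 <= bt <= 0 -> 0 < delta ->
  exp (- (c * delta)) <= (1 + 1 / c) * Rpower delta bt.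
Proof.
  intros hc hbt hd. unfold Rpower.
  assert (Hpow : exp (- bt * ln delta) <= 1 + delta).
  { destruct (Rle_dec delta 1).
    - assert (ln delta <= 0) by (rewrite <- ln_1; apply ln_le; lra).
      assert (exp (- bt * ln delta) <= 1) by (apply exp_le_1; nra). lra.
    - assert (0 <= ln delta) by (rewrite <- ln_1; apply ln_le; lra).
      assert (exp (- bt * ln delta) <= exp (ln delta)) by (apply exp_le_mono; nra).
      rewrite exp_ln in *; lra. }
  assert (Hc : 0 < 1 / c) by (apply Rdiv_lt_0_compat; lra).
  assert (H1 : 1 + delta <= (1 + 1 / c) * exp (c * delta)).
  { pose proof (exp_ineq1_le (c * delta)).
    assert (1 + delta <= (1 + 1 / c) * (1 + c * delta)).
    { replace ((1 + 1 / c) * (1 + c * delta)) with (1 + c * delta + 1 / c + delta)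
        by (field; lra). nra. }
    nra. }
  assert (Hinv : exp (- (c * delta)) * exp (c * delta) = 1)
    by (rewrite <- exp_plus, <- exp_0; f_equal; ring).
  assert (Hinv' : exp (bt * ln delta) * exp (- bt * ln delta) = 1)
    by (rewrite <- exp_plus, <- exp_0; f_equal; ring).
  pose proof (exp_pos (- (c * delta))). pose proof (exp_pos (bt * ln delta)).
  assert (Hprod : 0 < exp (- (c * delta)) * exp (bt * ln delta)) by nra.
  assert (exp (- (c * delta)) * exp (bt * ln delta) * exp (- bt * ln delta)
          <= exp (- (c * delta)) * exp (bt * ln delta) * ((1 + 1 / c) * exp (c * delta)))
    by (apply Rmult_le_compat_l; lra).
  nra.
Qed.

Definition sfbm_exp_cov_const (H theta : R) : R :=
  H * (2 * H - 1)
  * (Rpower 2 (2 - 2 * H) / theta / theta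
     + (1 + 4 / theta) * (8 / (2 * H - 1) + 2 / theta) * (2 / theta)).

Lemma sfbm_exp_cov_le H theta L a b c d w0 z0 :
  1 / 2 < H < 1 -> 0 < theta -> Rabs L = theta ->
  0 <= a <= b -> 0 <= c <= d -> w0 <> z0 ->
  (forall x, a <= x <= b -> 0 <= L * (x - w0)) ->
  (forall y, c <= y <= d -> 0 <= L * (y - z0)) ->
  exists I, sfbm_wiener_cov H (expw L w0) a b (expw L z0) c d I
            /\ I <= sfbm_exp_cov_const H theta * Rpower (Rabs (w0 - z0)) (2 * H - 2).
Proof.
  intros hH hth hL hab hcd hwz hx hy.
  assert (hL0 : L <> 0) by (intros ->; rewrite Rabs_R0 in hL; lra).
  set (K := H * (2 * H - 1)).
  set (delta := Rabs (w0 - z0)).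
  assert (hK : 0 <= K) by (unfold K; nra).
  assert (hd : 0 < delta) by (apply Rabs_pos_lt; lra).
  set (A := K * Rpower (delta / 2) (2 * H - 2)).
  set (B := K * exp (- (Rabs L / 4 * delta))).
  assert (hA : 0 <= A) by (apply Rmult_le_pos; [exact hK | apply Rlt_le, exp_pos]).
  assert (hB : 0 <= B) by (apply Rmult_le_pos; [exact hK | apply Rlt_le, exp_pos]).
  destruct (double_integral_nonneg_le
    (fun x y => expw L w0 x * expw L z0 y * sfbm_kernel H x y) a b c d
    (A / Rabs L / Rabs L + B * (8 / (2 * H - 1) + 2 / Rabs L) * (2 / Rabs L)))
    as [I [HI HIB]]; try lra.
  - intros x y hx' hy'.
    apply Rmult_le_pos; [apply Rlt_le, Rmult_lt_0_compat; apply expw_pos|].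
    apply sfbm_kernel_nonneg; lra.
  - apply split_majorant_lower_sums_le with (w0 := w0) (z0 := z0); try lra; try assumption.
    + intros x _ _. rewrite sfbm_kernel_diag. lra.
    + intros x y hx' hy' hxy.
      replace (2 * H - 1 - 1) with (2 * H - 2) by ring.
      apply expw_weighted_kernel_le; auto.
  - exists I. split; [exact HI|].
    eapply Rle_trans; [exact HIB|].
    unfold A, B, sfbm_exp_cov_const. rewrite hL. fold K.
    assert (Hhalf : Rpower (delta / 2) (2 * H - 2) = Rpower 2 (2 - 2 * H) * Rpower delta (2 * H - 2)).
    { unfold Rpower. rewrite <- exp_plus. f_equal.
      unfold Rdiv. rewrite ln_mult, ln_Rinv by lra. ring. }
    pose proof (exp_neg_le_rpow (theta / 4) (2 * H - 2) delta ltac:(lra) ltac:(lra) hd) as Hfar.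
    replace (1 + 1 / (theta / 4)) with (1 + 4 / theta) in Hfar by (field; lra).
    assert (HM : 0 <= (8 / (2 * H - 1) + 2 / theta) * (2 / theta)).
    { apply Rmult_le_pos; [apply Rplus_le_le_0_compat|]; apply Rlt_le, Rdiv_lt_0_compat; lra. }
    rewrite Hhalf.
    apply Rmult_le_compat_l with (r := K * ((8 / (2 * H - 1) + 2 / theta) * (2 / theta))) in Hfar;
      [|apply Rmult_le_pos; assumption].
    unfold Rdiv in *. nra.
Qed.

Theorem lemma6p1 (H theta : R) (hH : 1/2 < H < 1) (htheta : 0 < theta) :
  exists C : R,
    forall T s t : R, 0 <= s <= T -> 0 <= t <= T -> s <> t ->
      (exists I, sfbm_wiener_cov H (fun x => exp (- theta * (x - s))) s T
                                   (fun y => exp (- theta * (y - t))) t T I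
                 /\ I <= C * Rpower (Rabs (t - s)) (2 * H - 2)) /\
      (exists I, sfbm_wiener_cov H (fun u => exp (- theta * (t - u))) 0 t
                                   (fun v => exp (- theta * (s - v))) 0 s I
                 /\ I <= C * Rpower (Rabs (t - s)) (2 * H - 2)).
Proof.
  exists (sfbm_exp_cov_const H theta).
  intros T s t hs ht hst.
  assert (hreflect : forall z0, (fun u => exp (- theta * (z0 - u))) = expw (- theta) z0).
  { intros z0. apply functional_extensionality. intros u. unfold expw. f_equal. ring. }
  split.
  - rewrite Rabs_minus_sym.
    apply (sfbm_exp_cov_le H theta theta); try lra.
    + apply Rabs_right. lra.
    + intros x hx. nra.
    + intros y hy. nra.
  - rewrite !hreflect.
    apply (sfbm_exp_cov_le H theta (- theta)); try lra.
    + rewrite Rabs_Ropp. apply Rabs_right. lra.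
    + intros x hx. nra.
    + intros y hy. nra.
Qed.
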